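(* Let $r_1,r_2\in(0,1)$, $a_1,a_2\in(1,\infty)$, and for $i=1,2$ let $l_i$ be Lebesgue measurable, integrable, with $\int_{\mathbb{R}}l_i=1$, $\int_{\mathbb{R}}l_i(y)e^{\lambda y}dy<\infty$ for all $\lambda\in\mathbb{R}$, and $l_i(y)=l_i(-y)\ge0$. Define $Q=(Q_1,Q_2)$ on $\mathcal{C}_{[\theta,\mathbf{1}]}$ by \[ Q_1(\phi,\psi)(t)=1-\int_{\mathbb{R}}(1-\phi (y))e^{r_{1}(\phi (y)-a_{1}\psi(y))}l_{1}(t-y)\,dy,\quad Q_2(\phi,\psi)(t)=\int_{\mathbb{R}} \psi (y)e^{r_{2}(1-a_2-\psi (y)+a_{2}\phi (y))}l_{2}(t-y)\,dy. \] Then the fixed points $\theta=(0,0)$ and $M=(1,1)$ are strongly stable from above and below, respectively: there exist $\delta>0$ and unit vectors $E_4,E_5\in\mathbb{R}^2$ with $\theta\ll E_4,E_5\ll\mathbf{1}$ such that \[ Q[\eta E_4]\ll \eta E_4,\qquad Q[M-\eta E_5]\gg M-\eta E_5\qquad\text{for all }\eta\in(0,\delta] \] (constant vectors regarded as constant functions). Moreover, the set $F\setminus\{\theta,M\}$ is totally unordered, where $F$ is the set of constant fixed points of $Q$ with values in $[\theta,M]$.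
   Context: $\mathcal{C}$ is the space of uniformly continuous bounded functions $\mathbb{R}\to\mathbb{R}^2$ with the componentwise order; $\mathcal{C}_{[\theta,\mathbf{1}]}=\{U\in\mathcal{C}: (0,0)\le U(x)\le (1,1)\ \forall x\}$. For $U=(u_1,u_2),V=(v_1,v_2)$, $U\gg V$ means $u_i(x)>v_i(x)$ for $i=1,2$ and all $x$ (and $U\ll V$ analogously). A set is totally unordered if no two distinct elements are comparable in the componentwise order. *)

From HB Require Import structures.
From mathcomp Require Import all_boot all_order all_algebra.
From mathcomp Require Import all_classical all_reals all_analysis.
Set Implicit Arguments. Unset Strict Implicit. Unset Printing Implicit Defensive.
Import Order.TTheory GRing.Theory Num.Theory.
Local Open Scope classical_set_scope.
Local Open Scope ring_scope.

(* Lebesgue measure on R (completed, so that "Lebesgue measurable" is the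
   measurability notion for kernels and integrands). *)
Notation lmu := (@completed_lebesgue_measure _).

Definition integR (R : realType) (f : R -> R) : R := Rintegral lmu setT f.

Definition kernel_ok (R : realType) (l : R -> R) : Prop :=
  [/\ lmu.-integrable setT (EFin \o l),
      (\int[lmu]_(y in setT) (l y)%:E = 1)%E,
      (forall lam : R, (\int[lmu]_(y in setT) (l y * expR (lam * y))%:E < +oo)%E)
    & (forall y : R, l y = l (- y) /\ 0 <= l y)].

Definition Q1 (R : realType) (r1 a1 : R) (l1 : R -> R) (phi psi : R -> R) (t : R) : R :=
  1 - integR (fun y => (1 - phi y) * expR (r1 * (phi y - a1 * psi y)) * l1 (t - y)).

Definition Q2 (R : realType) (r2 a2 : R) (l2 : R -> R) (phi psi : R -> R) (t : R) : R :=
  integR (fun y => psi y * expR (r2 * (1 - a2 - psi y + a2 * phi y)) * l2 (t - y)).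

Definition cstf (R : realType) (c : R) : R -> R := fun _ => c.

(* F : constant fixed points of Q with values in [theta, M] = [0,1]^2. *)
Definition constFix (R : realType) (r1 r2 a1 a2 : R) (l1 l2 : R -> R) (p : R * R) : Prop :=
  [/\ 0 <= p.1 <= 1, 0 <= p.2 <= 1,
      (forall t, Q1 r1 a1 l1 (cstf p.1) (cstf p.2) t = p.1)
    & (forall t, Q2 r2 a2 l2 (cstf p.1) (cstf p.2) t = p.2)].

Definition le2 (R : realType) (p q : R * R) : Prop := p.1 <= q.1 /\ p.2 <= q.2.

Definition totally_unordered (R : realType) (S : set (R * R)) : Prop :=
  forall p q, S p -> S q -> p <> q -> ~ le2 p q.

From HB Require Import structures.
From mathcomp Require Import all_boot all_order all_algebra.
From mathcomp Require Import all_classical all_reals all_analysis.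
From mathcomp Require Import measurable_realfun lra ring.
Import Order.TTheory GRing.Theory Num.Theory.
Local Open Scope classical_set_scope.
Local Open Scope ring_scope.

(* On constant functions Q acts through the planar map (q1, q2): each kernel is a
   probability density and Lebesgue measure is invariant under y |-> t - y.  For
   x < 1 the first component decreases exactly when a1 y < x, and for y > 0 the
   second decreases exactly when 1 - a2 + a2 x < y; a unit vector E4 with
   a1 E4.2 < E4.1, and symmetrically E5 near M, therefore give strict sub- and
   super-solutions for small eta.  The constant fixed points other than theta and
   M are (1, 0) and the unique (since a1 a2 > 1) solution of x = a1 y,
   y = 1 - a2 + a2 x, which has x < 1 and 0 < y; these two are incomparable. *)

Section measure_preserving.
Local Open Scope ereal_scope.
Context {d} {T : measurableType d} {R : realType}.
Context {mu : {measure set T -> \bar R}} {f : T -> T}.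
Hypotheses (mf : measurable_fun setT f)
  (muf : forall A, measurable A -> mu (f @^-1` A) = mu A).

Lemma negligible_preimage N : mu.-negligible N -> mu.-negligible (f @^-1` N).
Proof.
move=> [M [mM M0 NM]]; exists (f @^-1` M); split => //.
- by rewrite -[X in measurable X]setTI; exact: mf.
- by rewrite muf.
- by move=> x /NM.
Qed.

Lemma ge0_integral_comp_measure_preserving (g : T -> \bar R) :
  measurable_fun setT g -> (forall x, 0 <= g x) ->
  \int[mu]_x g (f x) = \int[mu]_x g x.
Proof.
move=> mg g0; have := ge0_integral_pushforward mf mu measurableT mg (fun x _ => g0 x).
rewrite preimage_setT => <-.
by apply: eq_measure_integral => A mA _; exact: muf.
Qed.

End measure_preserving.

Local Notation completedR R := (caratheodory_type ((wlength (@idfun R))^*)%mu).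

Lemma completed_lebesgue_measurableE (R : realType) :
  (measurable : set (set (completedR R))) = completed_algebra_gen (@lebesgue_measure R).
Proof. by rewrite -g_sigma_completed_algebra_genE completed_caratheodory_measurable. Qed.

(* Both measures are restrictions of the outer measure [(wlength idfun)^*]. *)
Lemma completed_lebesgue_measure_setU_negligible (R : realType) (A N : set R) :
  lebesgue_measure.-negligible N -> lmu (A `|` N) = lebesgue_measure A.
Proof.
move=> [M [mM M0 NM]].
have N0 : ((wlength (@idfun R))^*)%mu N = 0%E.
  by apply/eqP; rewrite eq_le outer_measure_ge0 andbT -M0 le_outer_measure.
apply/eqP; rewrite eq_le; apply/andP; split; last exact: le_outer_measure.
apply: le_trans (outer_measureU2 _ _ _) _.
by rewrite [X in (_ + X <= _)%E](_ : _ = 0%E) ?adde0 //; exact: N0.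
Qed.

Section reflection.
Context {R : realType} (t : R).

Let measurable_subr : measurable_fun [set: measurableTypeR R] (fun y => t - y).
Proof. exact: (measurable_funB (measurable_cst t) (@measurable_id _ _ _)). Qed.

Lemma lebesgue_measure_preimage_subr (A : set (measurableTypeR R)) : measurable A ->
  lebesgue_measure ((fun y => t - y) @^-1` A) = lebesgue_measure A.
Proof.
move=> mA; apply/esym.
apply: (@lebesgue_measure_unique R (pushforward lebesgue_measure
  (fun y : measurableTypeR R => (t - y : measurableTypeR R)))) => //.
move=> _ [[a b] _ <-]; rewrite /= /pushforward.
rewrite (_ : _ @^-1` _ = `[t - b, t - a[%classic); last first.
  by apply/seteqP; split => x /=; rewrite !in_itv /= => /andP[? ?]; apply/andP; split; lra.
rewrite !lebesgue_measure_itv /= !lte_fin.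
have -> : (t - b < t - a) = (a < b) by apply/idP/idP; lra.
by case: ifP => // _; rewrite -!EFinB; congr (_%:E); lra.
Qed.

Lemma measurable_fun_completed_subr :
  measurable_fun [set: completedR R] (fun y : completedR R => (t - y : completedR R)).
Proof.
move=> _ B; rewrite completed_lebesgue_measurableE setTI.
move=> [A mA [N negN <-]]; exists ((fun y => t - y) @^-1` A).
  by rewrite -[X in measurable X]setTI; exact: measurable_subr.
exists ((fun y => t - y) @^-1` N) => //.
exact: negligible_preimage measurable_subr lebesgue_measure_preimage_subr _ negN.
Qed.

Lemma completed_lebesgue_measure_preimage_subr (B : set (completedR R)) : measurable B ->
  lmu ((fun y => t - y) @^-1` B) = lmu B.
Proof.
rewrite completed_lebesgue_measurableE => -[A mA [N negN <-]].
rewrite preimage_setU !completed_lebesgue_measure_setU_negligible //.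
- exact: lebesgue_measure_preimage_subr.
- exact: negligible_preimage measurable_subr lebesgue_measure_preimage_subr _ negN.
Qed.

End reflection.

Lemma integR_kernel_shift (R : realType) (l : R -> R) (t k : R) : kernel_ok l ->
  integR (fun y => k * l (t - y)) = k.
Proof.
move=> [il l1 _ l_ge0].
have ml := measurable_int lmu il.
have ml_shift := measurableT_comp ml (measurable_fun_completed_subr t).
have l1_shift : (\int[lmu]_y (l (t - y))%:E = 1)%E.
  rewrite -l1.
  apply: (ge0_integral_comp_measure_preserving (measurable_fun_completed_subr t)).
  - exact: completed_lebesgue_measure_preimage_subr.
  - exact: ml.
  - by move=> y; rewrite lee_fin; case: (l_ge0 y).
have il_shift : lmu.-integrable setT (EFin \o (fun y => l (t - y))).
  apply/integrableP; split => //.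
  under eq_integral => y _ do rewrite /= ger0_norm ?(proj2 (l_ge0 _)) //.
  by rewrite l1_shift ltry.
by rewrite /integR RintegralZl // /Rintegral l1_shift /= mulr1.
Qed.

Definition q1 {R : realType} (r a x y : R) : R := 1 - (1 - x) * expR (r * (x - a * y)).

Definition q2 {R : realType} (r a x y : R) : R := y * expR (r * (1 - a - y + a * x)).

Lemma Q1_cst (R : realType) (r a : R) (l : R -> R) (x y t : R) : kernel_ok l ->
  Q1 r a l (cstf x) (cstf y) t = q1 r a x y.
Proof. by move=> kl; rewrite /Q1 /cstf integR_kernel_shift. Qed.

Lemma Q2_cst (R : realType) (r a : R) (l : R -> R) (x y t : R) : kernel_ok l ->
  Q2 r a l (cstf x) (cstf y) t = q2 r a x y.
Proof. by move=> kl; rewrite /Q2 /cstf integR_kernel_shift. Qed.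

Section constant_maps.
Context {R : realType} (r a : R).
Hypothesis r_gt0 : 0 < r.
Implicit Types x y : R.

Lemma q1_subr x y : q1 r a x y - x = (1 - x) * (1 - expR (r * (x - a * y))).
Proof. by rewrite /q1; ring. Qed.

Lemma q2_subr x y : q2 r a x y - y = y * (expR (r * (1 - a - y + a * x)) - 1).
Proof. by rewrite /q2; ring. Qed.

Lemma q1_lt x y : x < 1 -> a * y < x -> q1 r a x y < x.
Proof.
move=> x_lt1 ay_lt_x; rewrite -subr_lt0 q1_subr pmulr_rlt0 ?subr_gt0 //.
by rewrite subr_lt0 expR_gt1 pmulr_rgt0 // subr_gt0.
Qed.

Lemma q1_gt x y : x < 1 -> x < a * y -> x < q1 r a x y.
Proof.
move=> x_lt1 x_lt_ay; rewrite -subr_gt0 q1_subr pmulr_rgt0 ?subr_gt0 //.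
by rewrite expR_lt1 pmulr_rlt0 // subr_lt0.
Qed.

Lemma q2_lt x y : 0 < y -> 1 - a + a * x < y -> q2 r a x y < y.
Proof.
move=> y_gt0 y_big; rewrite -subr_lt0 q2_subr pmulr_rlt0 // subr_lt0.
by rewrite expR_lt1 pmulr_rlt0 //; lra.
Qed.

Lemma q2_gt x y : 0 < y -> y < 1 - a + a * x -> y < q2 r a x y.
Proof.
move=> y_gt0 y_small; rewrite -subr_gt0 q2_subr pmulr_rgt0 // subr_gt0.
by rewrite expR_gt1 pmulr_rgt0 //; lra.
Qed.

Let expR_eq1 (z : R) : (expR z == 1) = (z == 0).
Proof. by rewrite -expR0 (inj_eq (@expR_inj R)). Qed.

Lemma q1_fixE x y : (q1 r a x y == x) = (x == 1) || (x == a * y).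
Proof.
rewrite -subr_eq0 q1_subr mulf_eq0 subr_eq0 eq_sym; congr (_ || _).
by rewrite subr_eq0 eq_sym expR_eq1 mulf_eq0 gt_eqF //= subr_eq0.
Qed.

Lemma q2_fixE x y : (q2 r a x y == y) = (y == 0) || (y == 1 - a + a * x).
Proof.
rewrite -subr_eq0 q2_subr mulf_eq0; congr (_ || _).
rewrite subr_eq0 expR_eq1 mulf_eq0 gt_eqF //=.
by apply/eqP/eqP => h; lra.
Qed.

End constant_maps.

Lemma constFix_cases {R : realType} {r1 r2 a1 a2 : R} {l1 l2 : R -> R} {x y : R} :
  0 < r1 -> 0 < r2 -> kernel_ok l1 -> kernel_ok l2 ->
  constFix r1 r2 a1 a2 l1 l2 (x, y) -> (x, y) <> (0, 0) -> (x, y) <> (1, 1) ->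
  x = 1 /\ y = 0 \/ [/\ x = a1 * y, y = 1 - a2 + a2 * x, x < 1 & 0 < y].
Proof.
move=> r1_gt0 r2_gt0 k1 k2 [/= /andP[x_ge0 x_le1] /andP[y_ge0 _] fix1 fix2] neq0 neq1.
move/eqP: (fix1 0); rewrite Q1_cst // q1_fixE // => /orP[]/eqP hx;
move/eqP: (fix2 0); rewrite Q2_cst // q2_fixE // => /orP[]/eqP hy.
- by left.
- by case: neq1; rewrite hy hx mulr1 subrK.
- by case: neq0; rewrite hx hy mulr0.
right; split => //.
- rewrite lt_neqAle x_le1 andbT; apply/eqP => x_eq1.
  by apply: neq1; rewrite hy x_eq1 mulr1 subrK.
- rewrite lt_neqAle y_ge0 andbT eq_sym; apply/eqP => y_eq0.
  by apply: neq0; rewrite hx y_eq0 mulr0.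
Qed.

Lemma coexistence_unique {R : realType} {a1 a2 x y x' y' : R} : 1 < a1 -> 1 < a2 ->
  x = a1 * y -> y = 1 - a2 + a2 * x -> x' = a1 * y' -> y' = 1 - a2 + a2 * x' ->
  (x, y) = (x', y').
Proof.
move=> a1_gt1 a2_gt1 -> hy -> hy'.
have lin z : z = 1 - a2 + a2 * (a1 * z) -> (a1 * a2 - 1) * z = a2 - 1 by move=> hz; lra.
suff -> : y = y' by [].
apply: (mulfI (x := a1 * a2 - 1)); first by rewrite subr_eq0 gt_eqF //; nra.
by rewrite lin ?lin.
Qed.

Lemma totally_unordered_constFix {R : realType} (r1 r2 a1 a2 : R) (l1 l2 : R -> R) :
  0 < r1 -> 0 < r2 -> 1 < a1 -> 1 < a2 -> kernel_ok l1 -> kernel_ok l2 ->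
  totally_unordered
    [set p : R * R | constFix r1 r2 a1 a2 l1 l2 p /\ p <> (0, 0) /\ p <> (1, 1)].
Proof.
move=> r1_gt0 r2_gt0 a1_gt1 a2_gt1 k1 k2.
move=> [x y] [x' y'] /= [Fp [p0 p1]] [Fq [q0 q1]] neq [/= le_x le_y].
have [[hx hy]|[hx hy x_lt1 y_gt0]] := constFix_cases r1_gt0 r2_gt0 k1 k2 Fp p0 p1;
have [[hx' hy']|[hx' hy' x_lt1' y_gt0']] := constFix_cases r1_gt0 r2_gt0 k1 k2 Fq q0 q1.
- by apply: neq; rewrite hx hy hx' hy'.
- by move: le_x; rewrite hx leNgt x_lt1'.
- by move: le_y; rewrite hy' leNgt y_gt0.
- exact: neq (coexistence_unique a1_gt1 a2_gt1 hx hy hx' hy').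
Qed.

(* Rational parametrization of the unit circle at s = 1 / (4 a), small enough
   for a v < u. *)
Lemma exists_unit_vector_slope_lt {R : realType} {a : R} : 1 < a ->
  exists u v : R, [/\ u ^+ 2 + v ^+ 2 = 1, 0 < u < 1, 0 < v < 1 & a * v < u].
Proof.
move=> a_gt1.
set s := (4 * a)^-1.
have hs : s * (4 * a) = 1 by rewrite mulVf //; lra.
have s_gt0 : 0 < s by rewrite invr_gt0; lra.
set w := (1 + s ^+ 2)^-1.
have hw : w * (1 + s ^+ 2) = 1 by rewrite mulVf //; nra.
have w_gt0 : 0 < w by rewrite invr_gt0; nra.
have s_lt : s < 1 / 4 by nra.
exists ((1 - s ^+ 2) * w), (2 * s * w); split.
- have -> : ((1 - s ^+ 2) * w) ^+ 2 + (2 * s * w) ^+ 2 = (w * (1 + s ^+ 2)) ^+ 2 by ring.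
  by rewrite hw expr1n.
- apply/andP; split; nra.
- apply/andP; split; nra.
- nra.
Qed.

Lemma exists_common_margin {R : realType} {a1 a2 : R} : 1 < a1 -> 1 < a2 ->
  exists d : R, [/\ 0 < d <= 1, a1 * d < a1 - 1 & a2 * d < a2 - 1].
Proof.
move=> a1_gt1 a2_gt1.
have e1 : a1^-1 * a1 = 1 by rewrite mulVf //; lra.
have e2 : a2^-1 * a2 = 1 by rewrite mulVf //; lra.
have p1 : 0 < a1^-1 by rewrite invr_gt0; lra.
have p2 : 0 < a2^-1 by rewrite invr_gt0; lra.
have q1 : a1^-1 < 1 by nra.
have q2 : a2^-1 < 1 by nra.
exists ((1 - a1^-1) * (1 - a2^-1)); split; [apply/andP; split| |]; nra.
Qed.

Theorem lemma4 (R : realType) (r1 r2 a1 a2 : R) (l1 l2 : R -> R) :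
  0 < r1 < 1 -> 0 < r2 < 1 -> 1 < a1 -> 1 < a2 ->
  kernel_ok l1 -> kernel_ok l2 ->
  (exists (delta : R) (E4 E5 : R * R),
    [/\ 0 < delta <= 1,
        E4.1 ^+ 2 + E4.2 ^+ 2 = 1 /\ E5.1 ^+ 2 + E5.2 ^+ 2 = 1,
        (0 < E4.1 < 1 /\ 0 < E4.2 < 1) /\ (0 < E5.1 < 1 /\ 0 < E5.2 < 1),
        (forall eta : R, 0 < eta <= delta -> forall t : R,
            Q1 r1 a1 l1 (cstf (eta * E4.1)) (cstf (eta * E4.2)) t < eta * E4.1 /\
            Q2 r2 a2 l2 (cstf (eta * E4.1)) (cstf (eta * E4.2)) t < eta * E4.2)
      & (forall eta : R, 0 < eta <= delta -> forall t : R,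
            Q1 r1 a1 l1 (cstf (1 - eta * E5.1)) (cstf (1 - eta * E5.2)) t > 1 - eta * E5.1 /\
            Q2 r2 a2 l2 (cstf (1 - eta * E5.1)) (cstf (1 - eta * E5.2)) t > 1 - eta * E5.2)])
  /\ totally_unordered
       [set p : R * R | constFix r1 r2 a1 a2 l1 l2 p /\ p <> (0, 0) /\ p <> (1, 1)].
Proof.
move=> /andP[r1_gt0 _] /andP[r2_gt0 _] a1_gt1 a2_gt1 k1 k2.
split; last exact: totally_unordered_constFix.
have [u [v [uv /andP[u_gt0 u_lt1] /andP[v_gt0 v_lt1] a1v_lt_u]]] :=
  exists_unit_vector_slope_lt a1_gt1.
have [u' [v' [uv' /andP[u_gt0' u_lt1'] /andP[v_gt0' v_lt1'] a2v_lt_u']]] :=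
  exists_unit_vector_slope_lt a2_gt1.
have [d [/andP[d_gt0 d_le1] a1d a2d]] := exists_common_margin a1_gt1 a2_gt1.
exists d, (u, v), (v', u'); split => /=.
- by rewrite d_gt0.
- by split; rewrite // addrC.
- by rewrite u_gt0 u_lt1 v_gt0 v_lt1 u_gt0' u_lt1' v_gt0' v_lt1'.
- move=> eta /andP[eta_gt0 eta_le] t; rewrite Q1_cst // Q2_cst //.
  have : a2 * (eta * u) <= a2 * d by rewrite ler_pM2l; nra.
  by split; [apply: q1_lt | apply: q2_lt]; nra.
- move=> eta /andP[eta_gt0 eta_le] t; rewrite Q1_cst // Q2_cst //.
  have : a1 * (eta * u') <= a1 * d by rewrite ler_pM2l; nra.
  by split; [apply: q1_gt | apply: q2_gt]; nra.
Qed.
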